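(* Let $\mathcal{X}=[-1,1]^d$. There exist absolute constants $c_0,c_1,c_2>0$ such that for any $s\ge c_0$ (with $s\le d$ and $s$ dividing $d$) and any $T\ge c_1d$, \[ \mathcal{E}^{\mathrm{NA}*}(\mathcal{X},\mathcal{O}_{\mathtt{blsp},s},T,\mathcal{W}_{\mathtt{obl}})\ \ge\ c_2\cdot\frac{sd}{T}. \]
   Context: Setting: an algorithm with $T$ queries interacts with an oracle $O$ for $f:\mathcal{X}\to\mathbb{R}$: at step $t$ it queries $x_t\in\mathcal{X}$; the oracle returns a random vector $\hat g(x_t)$; this is passed through a channel $W_t$ from a family $\mathcal{W}$ and only the output $Y_t$ is observed; $x_{t+1}$ and the final output $x_T$ are (possibly randomized) functions of $Y_1,\dots,Y_t$. In a nonadaptive channel selection strategy, $W_1,\dots,W_T$ are all fixed before the start. $\mathcal{E}^{\mathrm{NA}*}(\mathcal{X},\mathcal{O},T,\mathcal{W})=\inf_\pi\inf_{S\text{ nonadaptive}}\sup_{(f,O)\in\mathcal{O}}\mathbb{E}[f(x_T)-\min_{x\in\mathcal{X}}f(x)]$. $\mathcal{W}_{\mathtt{obl}}$: oblivious sampling channels, each specified by a probability vector $(p_i)_{i\in[d]}$, outputting $g(i)e_i$ with probability $p_i$ on input $g\in\mathbb{R}^d$. Assume $d/s$ is an integer and partition $[d]$ into the blocks $\{(k-1)s+1,\dots,ks\}$, $k\in[d/s]$. A vector $v\in\mathbb{R}^d$ is $s$-block sparse if it vanishes outside a single block and all coordinates in that block have the same absolute value, lying in $[0,1]$. $\mathcal{O}_{\mathtt{blsp},s}$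 is the set of pairs $(f_v,O_v)$, $v$ $s$-block sparse, where $f_v(x)=\|x-v\|_2^2$ on $\mathcal{X}$ and $O_v$ is an oracle associated with a random vector $X\in\{-1,1\}^d$ with independent coordinates and $\mathbb{E}[X]=v$: on query $x$ at time $t$ it outputs $2(x-X_t)$, where $X_1,X_2,\dots$ are i.i.d. copies of $X$. *)

From HB Require Import structures.
From mathcomp Require Import all_boot all_order all_algebra.
From mathcomp Require Import all_classical all_reals all_analysis.
Unset Printing Implicit Defensive.
Import Order.TTheory GRing.Theory Num.Theory.
Local Open Scope ring_scope.

Section Defs.
Variable R : realType.

Definition Xcube (d : nat) : set ('I_d -> R) := [set x | forall i, -1 <= x i <= 1].

Definition fv (d : nat) (v x : 'I_d -> R) : R := \sum_(i < d) (x i - v i) ^+ 2.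

Definition fmin (d : nat) (v : 'I_d -> R) : R := inf [set fv d v x | x in Xcube d].

(** s-block sparse vectors: blocks are {k s, ..., k s + s - 1} (0-indexed),
    i.e. coordinate i lies in block number i %/ s, for k < d/s. *)
Definition block_sparse (d s : nat) (v : 'I_d -> R) : Prop :=
  exists k : nat, (k < d %/ s)%N /\
    exists a : R, 0 <= a <= 1 /\
      forall i : 'I_d, if (i %/ s == k)%N then `|v i| = a else v i = 0.

(** Parameter of an oblivious sampling channel: a probability vector on [d]. *)
Definition prob_vec (d : nat) (p : 'I_d -> R) : Prop :=
  (forall i, 0 <= p i) /\ \sum_(i < d) p i = 1.

(** A (randomized) algorithm with internal randomness u : U.
    [query t u h] is the query x_{t+1} made after observing h = [Y_1;...;Y_t];
    [output u h] is the final output after observing h = [Y_1;...;Y_T]. *)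
Record algorithm (U : Type) (d : nat) := Algorithm {
  query : nat -> U -> seq ('I_d -> R) -> ('I_d -> R);
  output : U -> seq ('I_d -> R) -> ('I_d -> R) }.

(** Observation history after n steps, given the algorithm's randomness u,
    the oracle samples xs (xs t i = true means X_{t+1}(i) = +1, false means -1)
    and the sampled coordinates idx (idx t = index chosen by channel W_{t+1}).
    Oracle answer: g = 2 (x - X_t); channel output: g(i) e_i. *)
Fixpoint hist (U : Type) (d : nat) (A : algorithm U d) (u : U)
    (xs : nat -> 'I_d -> bool) (idx : nat -> 'I_d) (n : nat) : seq ('I_d -> R) :=
  match n with
  | 0 => [::]
  | n'.+1 =>
      let h := hist U d A u xs idx n' in
      let x := query U d A n' u h in
      let g := fun j => 2 * (x j - (if xs n' j then 1 else -1)) in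
      rcons h (fun j => if j == idx n' then g j else 0)
  end.

Definition alg_valid (U : Type) (d : nat) (A : algorithm U d) : Prop :=
  (forall t u h, Xcube d (query U d A t u h)) /\ (forall u h, Xcube d (output U d A u h)).

Definition alg_measurable (dU : measure_display) (U : measurableType dU) (d T : nat)
    (A : algorithm U d) : Prop :=
  (forall xs idx t (j : 'I_d),
      measurable_fun setT (fun u => query U d A t u (hist U d A u xs idx t) j)) /\
  (forall xs idx (j : 'I_d),
      measurable_fun setT (fun u => output U d A u (hist U d A u xs idx T) j)).

Definition ext_xs (d T : nat) (w : {ffun 'I_T -> {ffun 'I_d -> bool}}) :
    nat -> 'I_d -> bool :=
  fun n => match insub n with Some t => w t | None => fun _ => true end.

Definition ext_idx (d T : nat) (i0 : 'I_d) (w : {ffun 'I_T -> 'I_d}) : nat -> 'I_d :=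
  fun n => match insub n with Some t => w t | None => i0 end.

(** P(X(i) = b) when E[X(i)] = a. *)
Definition px (a : R) (b : bool) : R := if b then (1 + a) / 2 else (1 - a) / 2.

(** Probability of the oracle samples / channel choices w under O_v and strategy S
    (S t = probability vector of the oblivious channel W_{t+1}). *)
Definition outcome_prob (d T : nat) (v : 'I_d -> R) (S : nat -> 'I_d -> R)
    (w : {ffun 'I_T -> {ffun 'I_d -> bool}} * {ffun 'I_T -> 'I_d}) : R :=
  \prod_(t < T) ((\prod_(i < d) px (v i) (w.1 t i)) * S t (w.2 t)).

Definition expected_error (dU : measure_display) (U : measurableType dU)
    (P : probability U R) (d T : nat) (A : algorithm U d) (S : nat -> 'I_d -> R)
    (v : 'I_d -> R) : \bar R :=
  match d as d0 return (algorithm U d0 -> (nat -> 'I_d0 -> R) -> ('I_d0 -> R) -> \bar R) with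
  | 0 => fun _ _ _ => 0%E
  | d'.+1 => fun A S v =>
      (\int[P]_u
        (\sum_(w : {ffun 'I_T -> {ffun 'I_d'.+1 -> bool}} * {ffun 'I_T -> 'I_d'.+1})
           outcome_prob d'.+1 T v S w *
           (fv d'.+1 v (output U d'.+1 A u (hist U d'.+1 A u (ext_xs d'.+1 T w.1) (ext_idx d'.+1 T ord0 w.2) T)) - fmin d'.+1 v))%:E)%E
  end A S v.

Definition ENA (d s T : nat) : \bar R :=
  ereal_inf [set e | exists (dU : measure_display) (U : measurableType dU)
      (P : probability U R) (A : algorithm U d) (S : nat -> 'I_d -> R),
      [/\ alg_valid U d A, alg_measurable dU U d T A,
          (forall t, (t < T)%N -> prob_vec d (S t)) &
          e = ereal_sup [set expected_error dU U P d T A S v | v in block_sparse d s]]].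

End Defs.

From HB Require Import structures.
From mathcomp Require Import all_boot all_order all_algebra.
From mathcomp Require Import all_classical all_reals all_analysis.
From mathcomp Require Import measurable_realfun.
From mathcomp.algebra_tactics Require Import ring lra.
Import Order.TTheory GRing.Theory Num.Theory.
Local Open Scope ring_scope.

(* Assouad's method on a single block.  The channels are fixed in advance, so the
   expected number n_k of samples of coordinate k does not depend on the hypothesis;
   these numbers add up to T, hence some block of s coordinates is sampled at most
   about sT/d times.  Put signs of magnitude a, with a^2 = d/(80T), on that block and
   flip the sign of one coordinate i.  The algorithm only observes sampled coordinates,
   so re-flipping the unobserved samples of i shows that the two laws of the
   observations differ only in the rounds where i is sampled; their chi-square
   divergence is prod_t (1 + p_t(i) 4a^2/(1 - a^2)) - 1 <= 1/4 as soon as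
   40 a^2 n_i <= 1, and then one of the two signs costs about a^2 on coordinate i.
   Averaging over the sign patterns and the coordinates of the block gives a vertex
   with error at least s a^2/4 = sd/(320T). *)

Section RealFacts.
Context {R : realType}.

Lemma pxT_add_pxF (x : R) : px R x true + px R x false = 1.
Proof. by rewrite /px; field. Qed.

Lemma pxN (x : R) b : px R (- x) (~~ b) = px R x b.
Proof. by case: b; rewrite /px /= ?opprK. Qed.

Lemma px_gt0 (x : R) b : -1 < x < 1 -> 0 < px R x b.
Proof. by move=> /andP[? ?]; case: b; apply: divr_gt0 => //; lra. Qed.

Lemma sqr_le_half_lt1 (a : R) : 0 <= a -> a ^+ 2 <= 1 / 2 -> a < 1.
Proof. by rewrite expr2 => ? ?; nra. Qed.

Definition chi2_sign (a : R) : R := 4 * a ^+ 2 / (1 - a ^+ 2).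

Lemma chi2_signE (a : R) : -1 < a < 1 ->
  px R a true ^+ 2 / px R (- a) true + px R a false ^+ 2 / px R (- a) false
  = 1 + chi2_sign a.
Proof.
move=> /andP[? ?]; rewrite /px /chi2_sign /= opprK; field.
by rewrite !gt_eqF ?subr_gt0 ?expr2 //; nra.
Qed.

Lemma chi2_sign_bound (a : R) : a ^+ 2 <= 1 / 2 -> 0 <= chi2_sign a <= 8 * a ^+ 2.
Proof.
move=> ha; have a2_ge0 := sqr_ge0 a.
have den_gt0 : 0 < 1 - a ^+ 2 by lra.
rewrite /chi2_sign divr_ge0 ?(mulr_ge0 _ a2_ge0) ?(ltW den_gt0) //=.
by rewrite ler_pdivrMr //; nra.
Qed.

Lemma prodr1D_mul_1Bsum_le1 (I : Type) (r : seq I) (x : I -> R) :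
  (forall t, 0 <= x t) -> \prod_(t <- r) (1 + x t) * (1 - \sum_(t <- r) x t) <= 1.
Proof.
move=> x_ge0; elim: r => [|t r IH]; first by rewrite !big_nil subr0 mulr1.
rewrite !big_cons.
have p_ge0 : 0 <= \prod_(t <- r) (1 + x t).
  by apply: prodr_ge0 => j _; have := x_ge0 j; lra.
have s_ge0 : 0 <= \sum_(t <- r) x t by exact: sumr_ge0.
move: IH p_ge0 s_ge0 (x_ge0 t).
move: (\prod_(t <- r) (1 + x t)) (\sum_(t <- r) x t) (x t) => p s y IH p0 s0 y0.
have : 0 <= p * y * s by rewrite !mulr_ge0.
have : 0 <= p * y * y by rewrite !mulr_ge0.
nra.
Qed.

(* The minimum over [y] of the right-hand side is [4 b^2 r / (1 + r)]; a minorant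
   polynomial in [r] is used so that averaging over a likelihood ratio [r] only involves
   its first two moments. *)
Lemma two_point_quad_lb (r y b : R) : 0 <= r ->
  2 * b ^+ 2 * (2 * r - r ^+ 2 - 1 / 4) <= r * (y - b) ^+ 2 + (y + b) ^+ 2.
Proof.
move=> r0.
have := sqr_ge0 ((1 + r) * y + (1 - r) * b).
have := sqr_ge0 (r - 1 / 2).
have : 0 <= r * b ^+ 2 by rewrite mulr_ge0 ?sqr_ge0.
nra.
Qed.

End RealFacts.

Section Objective.
Context {R : realType} (d : nat).

Lemma fv_ge0 (v x : 'I_d -> R) : 0 <= fv R d v x.
Proof. by apply: sumr_ge0 => k _; exact: sqr_ge0. Qed.

Lemma fmin_le0 (v : 'I_d -> R) : Xcube R d v -> fmin R d v <= 0.
Proof.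
move=> v_cube; apply: ge_inf; first by exists 0 => _ [x _ <-]; exact: fv_ge0.
by exists v => //; rewrite /fv big1 // => k _; rewrite subrr expr0n.
Qed.

End Objective.

Lemma hist_eq_sampled (R : realType) U d (A : algorithm R U d) u xs xs' idx n :
  (forall m, (m < n)%N -> xs m (idx m) = xs' m (idx m)) ->
  hist R U d A u xs idx n = hist R U d A u xs' idx n.
Proof.
elim: n => [//|n IH] same_sampled /=.
rewrite IH => [|m lt_mn]; last exact/same_sampled/ltnW.
congr rcons; apply: funext => j.
by case: eqP => // ->; rewrite same_sampled.
Qed.

Section LowerBound.
Variables (R : realType) (d T : nat) (S : nat -> 'I_d -> R).

Local Notation outcome := ({ffun 'I_T -> {ffun 'I_d -> bool}} * {ffun 'I_T -> 'I_d})%type.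

Lemma sum_outcomes_prod (phi : 'I_T -> 'I_d -> 'I_d -> bool -> R) :
  \sum_(w : outcome) \prod_(t < T) ((\prod_(k < d) phi t k (w.2 t) (w.1 t k)) * S t (w.2 t))
  = \prod_(t < T) \sum_(j < d) (\prod_(k < d) (phi t k j true + phi t k j false)) * S t j.
Proof.
rewrite -(pair_bigA _ (fun (xs : {ffun 'I_T -> {ffun 'I_d -> bool}})
                          (idx : {ffun 'I_T -> 'I_d}) =>
  \prod_(t < T) ((\prod_(k < d) phi t k (idx t) (xs t k)) * S t (idx t)))) exchange_big /=.
under eq_bigr => idx _.
  rewrite -(bigA_distr_bigA (fun t (x : {ffun 'I_d -> bool}) =>
    (\prod_(k < d) phi t k (idx t) (x k)) * S t (idx t))).
  under eq_bigr => t _.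
    rewrite -mulr_suml -(bigA_distr_bigA (fun k b => phi t k (idx t) b)).
    under eq_bigr do rewrite big_bool.
    over.
  over.
by rewrite bigA_distr_bigA.
Qed.

(* [mu j] is the mean vector in the rounds where coordinate [j] is sampled. *)
Definition mixed_outcome_prob (mu : 'I_d -> 'I_d -> R) (w : outcome) : R :=
  \prod_(t < T) ((\prod_(k < d) px R (mu (w.2 t) k) (w.1 t k)) * S t (w.2 t)).

Hypothesis S_prob : forall t, (t < T)%N -> prob_vec R d (S t).

Lemma S_ge0 (t : 'I_T) j : 0 <= S t j.
Proof. by case: (S_prob _ (ltn_ord t)). Qed.

Lemma sum_S (t : 'I_T) : \sum_(j < d) S t j = 1.
Proof. by case: (S_prob _ (ltn_ord t)). Qed.

Lemma sum_mixed_outcome_prob mu : \sum_(w : outcome) mixed_outcome_prob mu w = 1.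
Proof.
rewrite (sum_outcomes_prod (fun _ k j => px R (mu j k))); apply: big1 => t _.
have prod_px1 j : \prod_(k < d) (px R (mu j k) true + px R (mu j k) false) = 1.
  by apply: big1 => k _; exact: pxT_add_pxF.
by under eq_bigr do rewrite prod_px1 mul1r; exact: sum_S.
Qed.

Lemma mixed_outcome_prob_ge0 mu : (forall j k, -1 < mu j k < 1) ->
  forall w, 0 <= mixed_outcome_prob mu w.
Proof.
move=> mu_bnd w; apply: prodr_ge0 => t _; rewrite mulr_ge0 ?S_ge0 //.
by apply: prodr_ge0 => k _; rewrite ltW ?px_gt0.
Qed.

Variables (U : Type) (A : algorithm R U d) (i0 : 'I_d) (u : U).
Variable a : R.
Hypotheses (a_ge0 : 0 <= a) (a2_le : a ^+ 2 <= 1 / 2).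

Definition final_output (w : outcome) : 'I_d -> R :=
  output R U d A u (hist R U d A u (ext_xs d T w.1) (ext_idx d T i0 w.2) T).

Definition sample_count (k : 'I_d) : R := \sum_(t < T) S t k.

Lemma sample_count_ge0 k : 0 <= sample_count k.
Proof. by apply: sumr_ge0 => t _; exact: S_ge0. Qed.

Lemma sum_sample_count : \sum_(k < d) sample_count k = T%:R.
Proof.
rewrite /sample_count exchange_big /= (eq_bigr _ (fun t _ => sum_S t)).
by rewrite sumr_const card_ord.
Qed.

Let a_lt1 : a < 1 := sqr_le_half_lt1 a a_ge0 a2_le.

Lemma prod_chi2_sign_le (i : 'I_d) : 40 * a ^+ 2 * sample_count i <= 1 ->
  \prod_(t < T) (1 + S t i * chi2_sign a) <= 5 / 4.
Proof.
move=> rare; have /andP[chi2_ge0 chi2_le] := chi2_sign_bound _ a2_le.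
have x_ge0 (t : 'I_T) : 0 <= S t i * chi2_sign a by rewrite mulr_ge0 ?S_ge0.
have := prodr1D_mul_1Bsum_le1 _ (index_enum 'I_T) _ x_ge0.
rewrite -mulr_suml -/(sample_count i) => prod_bound.
have chi2_n_le : chi2_sign a * sample_count i <= 1 / 5.
  have : chi2_sign a * sample_count i <= 8 * a ^+ 2 * sample_count i.
    by rewrite ler_wpM2r ?sample_count_ge0.
  lra.
have : 0 <= \prod_(t < T) (1 + S t i * chi2_sign a) * (1 / 5 - chi2_sign a * sample_count i).
  by rewrite mulr_ge0 ?subr_ge0 // prodr_ge0 // => t _; rewrite addr_ge0.
nra.
Qed.

Lemma sum_outcome_prob v : \sum_(w : outcome) outcome_prob R d T v S w = 1.
Proof. exact: (sum_mixed_outcome_prob (fun _ => v)). Qed.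

Lemma outcome_prob_ge0 v : (forall k, -1 < v k < 1) ->
  forall w, 0 <= outcome_prob R d T v S w.
Proof. by move=> v_bnd; apply: (mixed_outcome_prob_ge0 (fun _ => v)). Qed.

Section TwoPoint.
Variables (v : 'I_d -> R) (i : 'I_d).
Hypotheses (v_i : v i = a) (v_bnd : forall k, -1 < v k < 1).

Definition v_neg (k : 'I_d) : R := if k == i then - a else v k.

(* [Q] is the law under [v_neg] after flipping the unobserved samples of coordinate [i]:
   it differs from the law under [v] only in the rounds where [i] is sampled. *)
Definition mixed_mean (j k : 'I_d) : R :=
  if k == i then (if j == i then - a else a) else v k.

Definition flip_unsampled (w : outcome) : outcome :=
  ([ffun t => [ffun k => if (k == i) && (w.2 t != i) then ~~ w.1 t k else w.1 t k]], w.2).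

Definition lratio (w : outcome) : R := \prod_(t < T)
  ((\prod_(k < d) px R (v k) (w.1 t k)) / \prod_(k < d) px R (mixed_mean (w.2 t) k) (w.1 t k)).

Local Notation Q := (mixed_outcome_prob mixed_mean).

Lemma mixed_mean_bnd j k : -1 < mixed_mean j k < 1.
Proof.
rewrite /mixed_mean; case: (k == i); last exact: v_bnd.
by move: a_lt1 a_ge0 => ? ?; case: (j == i); apply/andP; split; lra.
Qed.

Lemma flip_unsampledK : involutive flip_unsampled.
Proof.
move=> [xs idx]; congr pair; apply/ffunP => t; apply/ffunP => k.
by rewrite !ffunE; case: (_ && _); rewrite ?negbK.
Qed.

Lemma outcome_prob_flip_unsampled w : outcome_prob R d T v_neg S (flip_unsampled w) = Q w.
Proof.
apply: eq_bigr => t _; congr (_ * _); apply: eq_bigr => k _.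
rewrite !ffunE /v_neg /mixed_mean; case: eqP => [->|] //=.
by case: (w.2 t =P i) => //= _; rewrite pxN.
Qed.

Lemma final_output_flip_unsampled w : final_output (flip_unsampled w) = final_output w.
Proof.
congr output; apply: hist_eq_sampled => m _.
rewrite /ext_xs /ext_idx; case: insubP => [t _ _|] //=.
by rewrite !ffunE; case: (w.2 t =P i) => //= ->; rewrite eqxx.
Qed.

Lemma px_mixed_gt0 (w : outcome) t : 0 < \prod_(k < d) px R (mixed_mean (w.2 t) k) (w.1 t k).
Proof. by apply: prodr_gt0 => k _; rewrite px_gt0 ?mixed_mean_bnd. Qed.

Lemma lratio_ge0 w : 0 <= lratio w.
Proof.
apply: prodr_ge0 => t _; rewrite divr_ge0 ?ltW ?px_mixed_gt0 //.
by apply: prodr_gt0 => k _; rewrite px_gt0.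
Qed.

Lemma outcome_prob_lratio w : outcome_prob R d T v S w = Q w * lratio w.
Proof.
rewrite /outcome_prob /mixed_outcome_prob /lratio -big_split /=; apply: eq_bigr => t _.
by have := px_mixed_gt0 w t; set B := \prod_(k < d) _ => B_gt0; field; rewrite gt_eqF.
Qed.

Lemma sum_mixed_lratio_sqr :
  \sum_(w : outcome) Q w * lratio w ^+ 2 = \prod_(t < T) (1 + S t i * chi2_sign a).
Proof.
have -> : \sum_(w : outcome) Q w * lratio w ^+ 2 = \sum_(w : outcome) \prod_(t < T)
    ((\prod_(k < d) (px R (v k) (w.1 t k) ^+ 2 / px R (mixed_mean (w.2 t) k) (w.1 t k)))
     * S t (w.2 t)).
  apply: eq_bigr => w _; rewrite /lratio -prodrXl -big_split /=; apply: eq_bigr => t _.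
  rewrite prodf_div prodrXl.
  by have := px_mixed_gt0 w t; set B := \prod_(k < d) _ => B_gt0; field; rewrite gt_eqF.
rewrite (sum_outcomes_prod (fun _ k j b => px R (v k) b ^+ 2 / px R (mixed_mean j k) b)).
have pair_term j k :
    px R (v k) true ^+ 2 / px R (mixed_mean j k) true
    + px R (v k) false ^+ 2 / px R (mixed_mean j k) false
    = if (k == i) && (j == i) then 1 + chi2_sign a else 1.
  have sqr_div_px x : -1 < x < 1 ->
      px R x true ^+ 2 / px R x true + px R x false ^+ 2 / px R x false = 1.
    by move=> x_bnd; rewrite !expr2 !mulfK ?gt_eqF ?px_gt0 ?pxT_add_pxF.
  rewrite /mixed_mean; have [->|_] /= := eqVneq k i; last exact: sqr_div_px.
  rewrite -v_i; have [_|_] := eqVneq j i; first by rewrite chi2_signE.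
  exact: sqr_div_px.
have prod_pair j : \prod_(k < d) (if (k == i) && (j == i) then 1 + chi2_sign a else 1)
    = if j == i then 1 + chi2_sign a else 1.
  by rewrite (bigD1 i) //= eqxx big1 ?mulr1 // => k /negbTE ->.
apply: eq_bigr => t _.
under eq_bigr => j _ do rewrite (eq_bigr _ (fun k _ => pair_term j k)) prod_pair.
have := sum_S t; rewrite (bigD1 i) //= => sum_S_t.
rewrite (bigD1 i) //= eqxx.
under eq_bigr => j /negbTE -> do rewrite mul1r.
lra.
Qed.

Lemma two_point_risk_chi2 :
  2 * a ^+ 2 * (7 / 4 - \prod_(t < T) (1 + S t i * chi2_sign a)) <=
  \sum_(w : outcome) outcome_prob R d T v S w * (final_output w i - a) ^+ 2
  + \sum_(w : outcome) outcome_prob R d T v_neg S w * (final_output w i + a) ^+ 2.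
Proof.
rewrite [X in _ <= _ + X](reindex_inj (inv_inj flip_unsampledK)) /=.
under [X in _ <= _ + X]eq_bigr do
  rewrite outcome_prob_flip_unsampled final_output_flip_unsampled.
under [X in _ <= X + _]eq_bigr do rewrite outcome_prob_lratio.
rewrite -big_split /=.
have -> : 2 * a ^+ 2 * (7 / 4 - \prod_(t < T) (1 + S t i * chi2_sign a))
    = \sum_(w : outcome) Q w * (2 * a ^+ 2 * (2 * lratio w - lratio w ^+ 2 - 1 / 4)).
  have sum_Q_lratio : \sum_(w : outcome) Q w * lratio w = 1.
    by under eq_bigr do rewrite -outcome_prob_lratio; exact: sum_outcome_prob.
  have expand (w : outcome) : Q w * (2 * a ^+ 2 * (2 * lratio w - lratio w ^+ 2 - 1 / 4))
      = 4 * a ^+ 2 * (Q w * lratio w) - 2 * a ^+ 2 * (Q w * lratio w ^+ 2) - a ^+ 2 / 2 * Q w.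
    by field.
  under [RHS]eq_bigr do rewrite expand.
  rewrite !sumrB -!mulr_sumr sum_Q_lratio sum_mixed_lratio_sqr sum_mixed_outcome_prob.
  by field.
apply: ler_sum => w _.
rewrite -[Q w * lratio w * _]mulrA -mulrDr ler_wpM2l ?two_point_quad_lb ?lratio_ge0 //.
apply: mixed_outcome_prob_ge0; exact: mixed_mean_bnd.
Qed.

Lemma two_point_risk :
  a ^+ 2 * (1 - 40 * a ^+ 2 * sample_count i) <=
  \sum_(w : outcome) outcome_prob R d T v S w * (final_output w i - a) ^+ 2
  + \sum_(w : outcome) outcome_prob R d T v_neg S w * (final_output w i + a) ^+ 2.
Proof.
have v_neg_bnd k : -1 < v_neg k < 1.
  by rewrite /v_neg; case: (k == i); [move: a_lt1 a_ge0 => ? ?; lra | exact: v_bnd].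
have a2_ge0 := sqr_ge0 a; have n_ge0 := sample_count_ge0 i.
have [rare|] := lerP (40 * a ^+ 2 * sample_count i) 1; last first.
  move=> often; apply: le_trans (_ : 0 <= _); first by rewrite mulr_ge0_le0 //; lra.
  by rewrite addr_ge0 // sumr_ge0 // => w _; rewrite mulr_ge0 ?sqr_ge0 ?outcome_prob_ge0.
apply: le_trans two_point_risk_chi2.
have := prod_chi2_sign_le _ rare.
have : 0 <= a ^+ 2 * (40 * a ^+ 2 * sample_count i) by rewrite !mulr_ge0.
nra.
Qed.

End TwoPoint.

Section Assouad.
Variables (s kb : nat).

Local Notation signs := {ffun 'I_d -> bool}.

Definition cube_vertex (sg : signs) (k : 'I_d) : R :=
  if (k %/ s == kb)%N then (if sg k then a else - a) else 0.

Definition flip_sign (k : 'I_d) (sg : signs) : signs :=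
  [ffun j => if j == k then ~~ sg j else sg j].

Definition coord_risk (k : 'I_d) (sg : signs) : R :=
  \sum_(w : outcome) outcome_prob R d T (cube_vertex sg) S w
                     * (final_output w k - cube_vertex sg k) ^+ 2.

Definition risk (sg : signs) : R :=
  \sum_(w : outcome) outcome_prob R d T (cube_vertex sg) S w
    * (fv R d (cube_vertex sg) (final_output w) - fmin R d (cube_vertex sg)).

Lemma flip_signK k : involutive (flip_sign k).
Proof. by move=> sg; apply/ffunP => j; rewrite !ffunE; case: (j == k); rewrite ?negbK. Qed.

Lemma cube_vertex_bnd (sg : signs) (k : 'I_d) : -1 < cube_vertex sg k < 1.
Proof.
move: a_lt1 a_ge0 => ? ?; rewrite /cube_vertex.
by case: (_ == _); [case: (sg k)|]; apply/andP; split; lra.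
Qed.

Lemma coord_risk_ge0 (k : 'I_d) (sg : signs) : 0 <= coord_risk k sg.
Proof.
apply: sumr_ge0 => w _; rewrite mulr_ge0 ?sqr_ge0 // outcome_prob_ge0 //.
exact: cube_vertex_bnd.
Qed.

Lemma coord_risk_flip_sign (k : 'I_d) (sg : signs) : (k %/ s == kb)%N ->
  a ^+ 2 * (1 - 40 * a ^+ 2 * sample_count k)
  <= coord_risk k sg + coord_risk k (flip_sign k sg).
Proof.
move=> k_in_block; wlog sg_k : sg / sg k.
  move=> sym; case sg_k: (sg k); first exact: sym.
  by rewrite [leRHS]addrC -{2}[sg](flip_signK k) sym // ffunE eqxx sg_k.
rewrite /coord_risk.
have vertex_k : cube_vertex sg k = a by rewrite /cube_vertex k_in_block sg_k.
have -> : cube_vertex (flip_sign k sg) = v_neg (cube_vertex sg) k.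
  apply: funext => j; rewrite /cube_vertex /v_neg ffunE.
  by have [->|] := eqVneq j k; rewrite ?k_in_block ?sg_k.
rewrite [v_neg _ _ k]/v_neg eqxx opprK vertex_k.
exact: (two_point_risk _ _ vertex_k) (cube_vertex_bnd sg).
Qed.

Lemma sum_coord_risk (k : 'I_d) : (k %/ s == kb)%N ->
  #|{: signs}|%:R * (a ^+ 2 / 2) * (1 - 40 * a ^+ 2 * sample_count k)
  <= \sum_(sg : signs) coord_risk k sg.
Proof.
move=> k_in_block.
have sum_flip :
    \sum_(sg : signs) coord_risk k (flip_sign k sg) = \sum_(sg : signs) coord_risk k sg.
  by rewrite [RHS](reindex_inj (inv_inj (flip_signK k))).
suff : #|{: signs}|%:R * (a ^+ 2 * (1 - 40 * a ^+ 2 * sample_count k))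
    <= \sum_(sg : signs) (coord_risk k sg + coord_risk k (flip_sign k sg)).
  by rewrite big_split /= sum_flip; lra.
rewrite -sum1_card natr_sum mulr_suml; apply: ler_sum => sg _.
by rewrite mul1r coord_risk_flip_sign.
Qed.

Lemma block_coord_risk_le_risk (sg : signs) :
  \sum_(k < d | (k %/ s == kb)%N) coord_risk k sg <= risk sg.
Proof.
rewrite exchange_big /=; apply: ler_sum => w _.
rewrite -mulr_sumr ler_wpM2l //; first by apply: outcome_prob_ge0; exact: cube_vertex_bnd.
have : fmin R d (cube_vertex sg) <= 0.
  by apply: fmin_le0 => k; have /andP[? ?] := cube_vertex_bnd sg k; rewrite !ltW.
have : \sum_(k < d | (k %/ s == kb)%N) (final_output w k - cube_vertex sg k) ^+ 2
    <= fv R d (cube_vertex sg) (final_output w).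
  rewrite /fv [leRHS](bigID (fun k : 'I_d => (k %/ s == kb)%N)) /= lerDl.
  by apply: sumr_ge0 => k _; exact: sqr_ge0.
lra.
Qed.

Lemma risk_ge0 (sg : signs) : 0 <= risk sg.
Proof.
apply: le_trans (block_coord_risk_le_risk sg).
by apply: sumr_ge0 => k _; exact: coord_risk_ge0.
Qed.

Lemma sum_risk_lb :
  #|{: signs}|%:R * (a ^+ 2 / 2)
    * \sum_(k < d | (k %/ s == kb)%N) (1 - 40 * a ^+ 2 * sample_count k)
  <= \sum_(sg : signs) risk sg.
Proof.
apply: le_trans (ler_sum _ (fun sg _ => block_coord_risk_le_risk sg)).
by rewrite exchange_big /= mulr_sumr; apply: ler_sum => k; exact: sum_coord_risk.
Qed.

End Assouad.
End LowerBound.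

Lemma exists_heavy_block {R : realType} (d s : nat) (f : 'I_d -> R) :
  (0 < s)%N -> (s %| d)%N -> (0 < d)%N ->
  exists2 kb, (kb < d %/ s)%N &
    \sum_(k < d) f k <= (d %/ s)%:R * \sum_(k < d | (k %/ s == kb)%N) f k.
Proof.
move=> s_gt0 s_dvd d_gt0; set m := (d %/ s)%N.
have block_lt (k : 'I_d) : (k %/ s < m)%N by rewrite ltn_divLR // divnK.
have m_gt0 : (0 < m)%N := leq_ltn_trans (leq0n _) (block_lt (Ordinal d_gt0)).
pose G (b : 'I_m) := \sum_(k < d | (k %/ s == b)%N) f k.
have [kb _ G_max] := @arg_maxP _ _ _ (Ordinal m_gt0) xpredT G isT.
exists kb => //.
have -> : \sum_(k < d) f k = \sum_(b < m) G b.
  by rewrite (partition_big (fun k => Ordinal (block_lt k)) xpredT) //=.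
apply: le_trans (ler_sum _ (fun b _ => G_max b isT)) _.
by rewrite sumr_const card_ord mulr_natl.
Qed.

Lemma mean_le_ub {R : realType} (I : finType) (F : I -> \bar R) (L : R) (M : \bar R) :
  (0 < #|I|)%N -> (forall i, F i <= M)%E -> ((#|I|%:R * L)%:E <= \sum_i F i)%E ->
  (L%:E <= M)%E.
Proof.
move=> I_gt0 F_le sum_ge.
have sum_le : (\sum_i F i <= \sum_(i : I) M)%E by apply: lee_sum => i _; exact: F_le.
have sum_M : (\sum_(i : I) M = #|I|%:R%:E * M)%E by rewrite mule_natl sumr_const.
move: (le_trans sum_ge sum_le); rewrite sum_M EFinM.
by rewrite lee_pmul2l // lte_fin ltr0n.
Qed.

Lemma risk_measurable (R : realType) (dU : measure_display) (U : measurableType dU)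
    d T S (A : algorithm R U d) i0 a s kb sg :
  alg_measurable R dU U d T A ->
  measurable_fun setT (fun u => risk R d T S U A i0 u a s kb sg).
Proof.
move=> [_ output_meas]; apply: measurable_sum => w.
apply: measurable_funM; first exact: measurable_cst.
apply: measurable_funB; last exact: measurable_cst.
apply: measurable_sum => k; apply: measurable_funX.
by apply: measurable_funB; [exact: output_meas | exact: measurable_cst].
Qed.

Lemma cst_le_sum_integral (R : realType) (dU : measure_display) (U : measurableType dU)
    (P : probability U R) (I : finType) (f : I -> U -> R) (c : R) :
  (forall i, measurable_fun setT (f i)) -> (forall i u, 0 <= f i u) -> 0 <= c ->
  (forall u, c <= \sum_i f i u) -> (c%:E <= \sum_i \int[P]_u (f i u)%:E)%E.
Proof.
move=> f_meas f_ge0 c_ge0 c_le.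
have Ef_meas i : measurable_fun setT (fun u => (f i u)%:E) by apply/measurable_EFinP.
rewrite -ge0_integral_sum // => [|i u _]; last by rewrite lee_fin.
apply: le_trans (_ : (\int[P]_u c%:E <= _)%E).
  by rewrite integral_cst //= probability_setT mule1.
apply: ge0_le_integral => //; first exact: emeasurable_sum.
by move=> u _; rewrite sumEFin lee_fin.
Qed.

Lemma cube_vertex_block_sparse (R : realType) d s kb (a : R) sg :
  (kb < d %/ s)%N -> 0 <= a <= 1 -> block_sparse R d s (cube_vertex R d a s kb sg).
Proof.
move=> kb_lt /andP[a_ge0 a_le1]; exists kb; split => //; exists a; split.
  by rewrite a_ge0 a_le1.
move=> k; rewrite /cube_vertex; case: (_ == kb) => //.
by case: (sg k); rewrite ?normrN ger0_norm.
Qed.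

Lemma heavy_block_risk_lb {R : realType} {d T s : nat} {S : nat -> 'I_d -> R} {a : R} :
  (forall t, (t < T)%N -> prob_vec R d (S t)) -> (0 < s)%N -> (s %| d)%N -> (0 < d)%N ->
  0 <= a -> a ^+ 2 <= 1 / 2 -> 80 * a ^+ 2 * T%:R = d%:R ->
  exists2 kb, (kb < d %/ s)%N & forall U (A : algorithm R U d) i0 u,
    #|{: {ffun 'I_d -> bool}}|%:R * (a ^+ 2 * s%:R / 4)
    <= \sum_sg risk R d T S U A i0 u a s kb sg.
Proof.
move=> S_prob s_gt0 s_dvd d_gt0 a_ge0 a2_le a2_T.
pose slack k := 1 - 40 * a ^+ 2 * sample_count R d T S k.
have [kb kb_lt heavy] := exists_heavy_block _ _ slack s_gt0 s_dvd d_gt0.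
exists kb => // U A i0 u.
apply: le_trans (sum_risk_lb _ _ _ _ S_prob _ A i0 u _ a_ge0 a2_le s kb).
have sum_slack : \sum_(k < d) slack k = d%:R / 2.
  rewrite sumrB sumr_const card_ord -mulr_sumr sum_sample_count //.
  by rewrite -a2_T; field.
have blocks : (d %/ s)%:R = d%:R / s%:R :> R.
  by rewrite -{2}(divnK s_dvd) natrM mulfK // pnatr_eq0 -lt0n.
have s_pos : 0 < s%:R :> R by rewrite ltr0n.
have block_ge : s%:R / 2 <= \sum_(k < d | (k %/ s == kb)%N) slack k.
  rewrite -(ler_pM2l (_ : 0 < d%:R / s%:R)); last by rewrite divr_gt0 ?ltr0n.
  have -> : d%:R / s%:R * (s%:R / 2) = d%:R / 2 :> R by field; rewrite gt_eqF.
  by rewrite -sum_slack -blocks.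
have : 0 <= #|{: {ffun 'I_d -> bool}}|%:R * a ^+ 2
            * (\sum_(k < d | (k %/ s == kb)%N) slack k - s%:R / 2).
  by rewrite !mulr_ge0 ?sqr_ge0 // subr_ge0.
nra.
Qed.

Lemma block_sparse_error_lb (R : realType) (dU : measure_display) (U : measurableType dU)
    (P : probability U R) (d s T : nat) (A : algorithm R U d.+1) (S : nat -> 'I_d.+1 -> R) :
  (0 < s)%N -> (s %| d.+1)%N -> (d.+1 <= T)%N -> alg_measurable R dU U d.+1 T A ->
  (forall t, (t < T)%N -> prob_vec R d.+1 (S t)) ->
  ((s%:R * d.+1%:R / (320 * T%:R))%:E
   <= ereal_sup [set expected_error R dU U P d.+1 T A S v | v in block_sparse R d.+1 s])%E.
Proof.
move=> s_gt0 s_dvd d_le_T A_meas S_prob.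
have T_pos : 0 < T%:R :> R by rewrite ltr0n (leq_trans _ d_le_T).
pose a : R := Num.sqrt (d.+1%:R / (80 * T%:R)).
have a_ge0 : 0 <= a := sqrtr_ge0 _.
have a2 : a ^+ 2 = d.+1%:R / (80 * T%:R) by rewrite sqr_sqrtr // divr_ge0 ?mulr_ge0 ?ltW.
have a2_T : 80 * a ^+ 2 * T%:R = d.+1%:R by rewrite a2; field; rewrite gt_eqF.
have a2_le : a ^+ 2 <= 1 / 2.
  rewrite a2 ler_pdivrMr ?mulr_gt0 //.
  have : d.+1%:R <= T%:R :> R by rewrite ler_nat.
  lra.
have [kb kb_lt risk_lb] := heavy_block_risk_lb S_prob s_gt0 s_dvd (ltn0Sn d) a_ge0 a2_le a2_T.
set L := s%:R * d.+1%:R / (320 * T%:R).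
have L_eq : L = a ^+ 2 * s%:R / 4 by rewrite a2 /L; field; rewrite gt_eqF.
apply: (@mean_le_ub R _ (fun sg => \int[P]_u (risk R d.+1 T S U A ord0 u a s kb sg)%:E)%E).
- by apply/card_gt0P; exists [ffun=> true].
- move=> sg; apply: ereal_sup_ubound; exists (cube_vertex R d.+1 a s kb sg) => //.
  by apply: cube_vertex_block_sparse; rewrite // a_ge0 ltW ?(sqr_le_half_lt1 a).
apply: cst_le_sum_integral => [sg|sg u||u]; first exact: risk_measurable.
- exact: risk_ge0.
- by rewrite L_eq !mulr_ge0 ?sqr_ge0.
- by rewrite L_eq risk_lb.
Qed.

Theorem theorem12 (R : realType) :
  exists c0 c1 c2 : R, [/\ 0 < c0, 0 < c1, 0 < c2 &
    forall d s T : nat,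
      c0 <= s%:R -> (s <= d)%N -> (s %| d)%N -> c1 * d%:R <= T%:R ->
      ((c2 * (s%:R * d%:R / T%:R))%:E <= ENA R d s T)%E].
Proof.
exists 1, 1, (1 / 320); split => // d s T s_ge1 s_le_d s_dvd d_le_T.
have s_gt0 : (0 < s)%N by rewrite -(ler1n R).
case: d s_le_d s_dvd d_le_T => [|d] s_le_d s_dvd d_le_T.
  by rewrite leqn0 in s_le_d; rewrite (eqP s_le_d) in s_gt0.
rewrite mul1r ler_nat in d_le_T.
have T_pos : 0 < T%:R :> R by rewrite ltr0n (leq_trans _ d_le_T).
apply/ereal_infP => _ [dU [U [P [A [S [_ A_meas S_prob ->]]]]]].
have -> : 1 / 320 * (s%:R * d.+1%:R / T%:R) = s%:R * d.+1%:R / (320 * T%:R) :> R.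
  by field; rewrite gt_eqF.
exact: block_sparse_error_lb.
Qed.
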